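(* For every $K^{\#}$-formula $\phi$ there exists a GNN $\mathcal{A}$ with $[[\mathcal{A}]]=[[\phi]]$ whose number of layers is $O(\mathrm{md}(\phi))$, where $\mathrm{md}(\phi)$ is the modal depth of $\phi$.
   Context: Graphs: a (labeled directed) graph is $G=(V,E,\ell)$ with $V$ finite, $E\subseteq V\times V$, and $\ell$ mapping each vertex to a truth valuation of atomic propositions; a pointed graph is $(G,u)$ with $u\in V$. GNNs: a GNN over input propositions $p_1,\dots,p_k$ is given by $L$ layers, layer $t$ specified by integer matrices $C_t,A_t\in\mathbb{Z}^{d_{t-1}\times d_t}$ and integer vector $b_t\in\mathbb{Z}^{d_t}$ ($d_0=k$), and a classifier $\mathit{cls}(x)=1$ iff $\sum_i a_ix_i\ge1$ with integer $a_i$. States: $x_0(u)=(\ell(u)(p_1),\dots,\ell(u)(p_k))$, $x_t(u)=\boldsymbol\sigma(x_{t-1}(u)C_t+(\sum_{v:(u,v)\in E}x_{t-1}(v))A_t+b_t)$ with $\sigma(z)=\max(0,\min(1,z))$ componentwise. $[[\mathcal{A}]]$ is the set of pointed graphs $(G,u)$ with $\mathit{cls}(x_L(u))=1$. Logic $K^{\#}$: formulas $\phi ::= p \mid \neg\phi \mid \phi\lor\phi \mid \xi\ge 0$, expressions $\xi ::= c \mid 1_\phi \mid \#\phi \mid \xi+\xi \mid c\times\xi$ ($c\in\mathbb{Z}$), with $[[1_\phi]]_{G,u}\in\{0,1\}$ the truth value of $\phi$ at $u$ and $[[\#\phi]]_{G,u}$ the number of successors of $u$ satisfying $\phi$; $(G,u)\models\xi\ge0$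 iff $[[\xi]]_{G,u}\ge0$; $[[\phi]]$ is the set of pointed graphs satisfying $\phi$. Modal depth: $\mathrm{md}(p)=\mathrm{md}(c)=0$, $\mathrm{md}(\neg\phi)=\mathrm{md}(1_\phi)=\mathrm{md}(\phi)$, $\mathrm{md}(\phi\lor\psi)=\max(\mathrm{md}(\phi),\mathrm{md}(\psi))$, $\mathrm{md}(\xi\ge0)=\mathrm{md}(c\times\xi)=\mathrm{md}(\xi)$, $\mathrm{md}(\#\phi)=\mathrm{md}(\phi)+1$, $\mathrm{md}(\xi_1+\xi_2)=\max(\mathrm{md}(\xi_1),\mathrm{md}(\xi_2))$. *)

From HB Require Import structures.
From mathcomp Require Import all_boot all_order all_algebra.
Set Implicit Arguments. Unset Strict Implicit. Unset Printing Implicit Defensive.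
Import Order.TTheory GRing.Theory Num.Theory.
Local Open Scope ring_scope.

(* ---------- Graphs ----------
   A labeled directed graph: vertex finType T, edge relation E : rel T,
   labelling lab : T -> nat -> bool (atomic propositions are indexed by nat). *)

Inductive kform : Type :=
  | FProp : nat -> kform
  | FNeg  : kform -> kform
  | FOr   : kform -> kform -> kform
  | FGe   : kexpr -> kform
with kexpr : Type :=
  | EConst : int -> kexpr
  | EInd   : kform -> kexpr
  | ECount : kform -> kexpr
  | EPlus  : kexpr -> kexpr -> kexpr
  | EScale : int -> kexpr -> kexpr.

Section Semantics.
Variables (T : finType) (E : rel T) (lab : T -> nat -> bool).

Fixpoint sat (phi : kform) (u : T) {struct phi} : bool :=
  match phi with
  | FProp p => lab u p
  | FNeg psi => ~~ sat psi u
  | FOr psi1 psi2 => sat psi1 u || sat psi2 u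
  | FGe xi => (0 <= val xi u)%R
  end
with val (xi : kexpr) (u : T) {struct xi} : int :=
  match xi with
  | EConst c => c
  | EInd psi => (sat psi u)%:R
  | ECount psi => (\sum_(v : T | E u v && sat psi v) 1%N)%:R
  | EPlus xi1 xi2 => val xi1 u + val xi2 u
  | EScale c xi1 => c * val xi1 u
  end.
End Semantics.

Fixpoint md (phi : kform) : nat :=
  match phi with
  | FProp _ => 0
  | FNeg psi => md psi
  | FOr psi1 psi2 => maxn (md psi1) (md psi2)
  | FGe xi => mde xi
  end
with mde (xi : kexpr) : nat :=
  match xi with
  | EConst _ => 0
  | EInd psi => md psi
  | ECount psi => (md psi).+1
  | EPlus xi1 xi2 => maxn (mde xi1) (mde xi2)
  | EScale _ xi1 => mde xi1
  end.

Definition sigma (z : int) : int := Num.max 0 (Num.min 1 z).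

Inductive layers : nat -> nat -> Type :=
  | LNil  : forall d, layers d d
  | LCons : forall d0 d1 d2, 'M[int]_(d0, d1) -> 'M[int]_(d0, d1) -> 'rV[int]_d1 ->
            layers d1 d2 -> layers d0 d2.

Fixpoint nlayers d0 d2 (L : layers d0 d2) : nat :=
  match L with
  | LNil _ => 0
  | LCons _ _ _ _ _ _ L' => (nlayers L').+1
  end.

Record GNN : Type := MkGNN {
  gk : nat;
  gin : 'I_gk -> nat;
  gout : nat;
  glayers : layers gk gout;
  gcls : 'I_gout -> int
}.

Definition num_layers (A : GNN) : nat := nlayers (glayers A).

Section GNNSemantics.
Variables (T : finType) (E : rel T) (lab : T -> nat -> bool).

Fixpoint run d0 d2 (L : layers d0 d2) : (T -> 'rV[int]_d0) -> (T -> 'rV[int]_d2) :=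
  match L in layers a c return (T -> 'rV[int]_a) -> (T -> 'rV[int]_c) with
  | LNil _ => fun x => x
  | LCons _ _ _ C A b L' => fun x =>
      run L' (fun u => map_mx sigma (x u *m C + (\sum_(v : T | E u v) x v) *m A + b))
  end.

Definition input_state (A : GNN) (u : T) : 'rV[int]_(gk A) :=
  \row_(i < gk A) ((lab u (@gin A i))%:R : int).

Definition accepts (A : GNN) (u : T) : Prop :=
  (1 <= \sum_(i < gout A) @gcls A i * run (glayers A) (input_state A) u 0 i)%R.
End GNNSemantics.

From Pilot Require Import Defs.
From HB Require Import structures.
From mathcomp Require Import all_boot all_order all_algebra.
From mathcomp Require Import ring zify.
Set Implicit Arguments. Unset Strict Implicit. Unset Printing Implicit Defensive.
Import Order.TTheory GRing.Theory Num.Theory.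
Local Open Scope ring_scope.

(* Every vertex carries the 0/1 truth values of all subformulas of phi.  If
   these values are correct for the subformulas of modal depth < l, then the
   truth value at u of any subformula of depth <= l is a Boolean combination of
   finitely many integer threshold tests  0 <= a.x_u + b.(sum of x_v over the
   successors v of u) + c : a counting term #psi is a coordinate of the
   neighbour sum, and an indicator 1_psi only selects one of finitely many
   linear forms.  Three layers realise any such Boolean combination: the first
   evaluates all the tests (on integers, sigma(z + 1) = [z >= 0]), the second
   one-hot encodes the resulting bit vector, and the third reads every
   subformula's truth value off a table.  After md(phi) + 1 such rounds phi
   itself is known, with 3 (md(phi) + 1) layers. *)

Scheme kform_mut := Induction for kform Sort Prop
  with kexpr_mut := Induction for kexpr Sort Prop.

Fixpoint kform_eqb (a b : kform) : bool :=
  match a, b with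
  | FProp p, FProp q => p == q
  | FNeg a, FNeg b => kform_eqb a b
  | FOr a1 a2, FOr b1 b2 => kform_eqb a1 b1 && kform_eqb a2 b2
  | FGe x, FGe y => kexpr_eqb x y
  | _, _ => false
  end
with kexpr_eqb (x y : kexpr) : bool :=
  match x, y with
  | EConst c, EConst d => c == d
  | EInd a, EInd b => kform_eqb a b
  | ECount a, ECount b => kform_eqb a b
  | EPlus x1 x2, EPlus y1 y2 => kexpr_eqb x1 y1 && kexpr_eqb x2 y2
  | EScale c x, EScale d y => (c == d) && kexpr_eqb x y
  | _, _ => false
  end.

Lemma kform_eqb_eq a b : kform_eqb a b -> a = b.
Proof.
move: a b; apply (@kform_mut (fun a => forall b, kform_eqb a b -> a = b)
                             (fun x => forall y, kexpr_eqb x y -> x = y)).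
- by move=> p [] //= q /eqP ->.
- by move=> a IH [] //= b /IH ->.
- by move=> a1 IH1 a2 IH2 [] //= b1 b2 /andP[/IH1 -> /IH2 ->].
- by move=> x IH [] //= y /IH ->.
- by move=> c [] //= d /eqP ->.
- by move=> a IH [] //= b /IH ->.
- by move=> a IH [] //= b /IH ->.
- by move=> x1 IH1 x2 IH2 [] //= y1 y2 /andP[/IH1 -> /IH2 ->].
- by move=> c x IH [] //= d y /andP[/eqP -> /IH ->].
Qed.

Lemma kform_eqb_refl a : kform_eqb a a.
Proof.
move: a; apply (@kform_mut (fun a => kform_eqb a a) (fun x => kexpr_eqb x x)) => //=.
- by move=> ? -> ? ->.
- by move=> ? -> ? ->.
- by move=> c x ->; rewrite eqxx.
Qed.

Lemma kform_eqP : Equality.axiom kform_eqb.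
Proof.
move=> a b; apply: (iffP idP); first exact: kform_eqb_eq.
by move=> ->; apply: kform_eqb_refl.
Qed.

HB.instance Definition _ := hasDecEq.Build kform kform_eqP.

Fixpoint subf (a : kform) : seq kform :=
  match a with
  | FProp p => [:: FProp p]
  | FNeg b => FNeg b :: subf b
  | FOr b c => FOr b c :: subf b ++ subf c
  | FGe xi => FGe xi :: subfe xi
  end
with subfe (xi : kexpr) : seq kform :=
  match xi with
  | EConst _ => [::]
  | EInd a | ECount a => subf a
  | EPlus xi1 xi2 => subfe xi1 ++ subfe xi2
  | EScale _ xi1 => subfe xi1
  end.

Lemma subf_refl a : a \in subf a.
Proof. by case: a => * /=; rewrite in_cons eqxx. Qed.

Lemma subf_trans a c : c \in subf a -> {subset subf c <= subf a}.
Proof.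
move: a c; apply (@kform_mut
  (fun a => forall c, c \in subf a -> {subset subf c <= subf a})
  (fun xi => forall c, c \in subfe xi -> {subset subf c <= subfe xi})) => //.
- by move=> p c; rewrite inE => /eqP ->.
- move=> a IH c; rewrite inE => /orP[/eqP -> //|/IH sub] d /sub.
  by rewrite /= inE => ->; rewrite orbT.
- move=> a IHa b IHb c; rewrite inE => /orP[/eqP -> //|].
  by rewrite mem_cat => /orP[/IHa sub|/IHb sub] d /sub;
    rewrite /= inE mem_cat => ->; rewrite ?orbT.
- move=> xi IH c; rewrite inE => /orP[/eqP -> //|/IH sub] d /sub.
  by rewrite /= inE => ->; rewrite orbT.
- by move=> xi1 IH1 xi2 IH2 c; rewrite mem_cat => /orP[/IH1 sub|/IH2 sub] d /sub;
    rewrite /= mem_cat => ->; rewrite ?orbT.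
Qed.

(** * Threshold tests *)

Section LinearForms.
Variable n : nat.

(* A form (a, b, c) stands for (x, s) |-> x.a + s.b + c, where x is the state
   of a vertex and s the sum of the states of its successors. *)
Definition lform := ('rV[int]_n * 'rV[int]_n * int)%type.

Definition leval (h : lform) (x s : 'rV[int]_n) : int :=
  \sum_i (x 0 i * h.1.1 0 i + s 0 i * h.1.2 0 i) + h.2.

Definition lconst (c : int) : lform := (0, 0, c).
Definition ladd (h1 h2 : lform) : lform := (h1.1.1 + h2.1.1, h1.1.2 + h2.1.2, h1.2 + h2.2).
Definition lscale (c : int) (h : lform) : lform := (c *: h.1.1, c *: h.1.2, c * h.2).

Lemma leval_const c x s : leval (lconst c) x s = c.
Proof. by rewrite /leval big1 ?add0r // => i _; rewrite !mxE !mulr0 addr0. Qed.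

Lemma leval_add h1 h2 x s : leval (ladd h1 h2) x s = leval h1 x s + leval h2 x s.
Proof.
rewrite /leval /= addrACA -big_split /=; congr (_ + _).
by apply: eq_bigr => i _; rewrite !mxE; ring.
Qed.

Lemma leval_scale c h x s : leval (lscale c h) x s = c * leval h x s.
Proof.
rewrite /leval /= mulrDr mulr_sumr; congr (_ + _).
by apply: eq_bigr => i _; rewrite !mxE; ring.
Qed.

End LinearForms.

Section Compilation.
Variable S : seq kform.
Local Notation n := (size S).

Definition coord (c : kform) : 'rV[int]_n := \row_(j < n) ((j : nat) == index c S)%:R.

Lemma sum_mul_coord c (f : 'I_n -> int) (i : 'I_n) : (i : nat) = index c S ->
  \sum_j f j * coord c 0 j = f i.
Proof.
move=> ic; rewrite (bigD1 i) //= big1 ?addr0; first by rewrite mxE -ic eqxx mulr1.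
move=> j ji; rewrite mxE -ic; case: eqP => [/val_inj eq_ji|]; last by rewrite mulr0.
by rewrite eq_ji eqxx in ji.
Qed.

(* A proposition p is the test x_p - 1 >= 0.  Through 1_b, the linear form of
   an expression depends on the answers [beta] to the tests of b. *)
Fixpoint feval (beta : lform n -> bool) (a : kform) {struct a} : bool :=
  match a with
  | FProp p => beta (coord (FProp p), 0, -1)
  | FNeg b => ~~ feval beta b
  | FOr b c => feval beta b || feval beta c
  | FGe xi => beta (eform beta xi)
  end
with eform (beta : lform n -> bool) (xi : kexpr) {struct xi} : lform n :=
  match xi with
  | EConst c => lconst n c
  | EInd b => lconst n (feval beta b)%:R
  | ECount b => (0, coord b, 0)
  | EPlus xi1 xi2 => ladd (eform beta xi1) (eform beta xi2)
  | EScale c xi1 => lscale c (eform beta xi1)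
  end.

Fixpoint forms (xi : kexpr) : seq (lform n) :=
  match xi with
  | EConst c => [:: lconst n c]
  | EInd _ => [:: lconst n 0; lconst n 1]
  | ECount b => [:: (0, coord b, 0)]
  | EPlus xi1 xi2 => [seq ladd h1 h2 | h1 <- forms xi1, h2 <- forms xi2]
  | EScale c xi1 => map (lscale c) (forms xi1)
  end.

Fixpoint tests (a : kform) : seq (lform n) :=
  match a with
  | FProp p => [:: (coord (FProp p), 0, -1)]
  | FNeg b => tests b
  | FOr b c => tests b ++ tests c
  | FGe xi => forms xi ++ etests xi
  end
with etests (xi : kexpr) : seq (lform n) :=
  match xi with
  | EConst _ | ECount _ => [::]
  | EInd b => tests b
  | EPlus xi1 xi2 => etests xi1 ++ etests xi2
  | EScale _ xi1 => etests xi1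
  end.

Lemma eform_forms beta xi : eform beta xi \in forms xi.
Proof.
elim: xi => [c|b|b|xi1 IH1 xi2 IH2|c xi IH] /=.
- exact: mem_head.
- by case: (feval beta b); rewrite !inE eqxx ?orbT.
- exact: mem_head.
- exact: allpairs_f.
- exact: map_f.
Qed.

Lemma feval_ext beta1 beta2 a :
  {in tests a, beta1 =1 beta2} -> feval beta1 a = feval beta2 a.
Proof.
move: a; apply (@kform_mut
  (fun a => {in tests a, beta1 =1 beta2} -> feval beta1 a = feval beta2 a)
  (fun xi => {in etests xi, beta1 =1 beta2} -> eform beta1 xi = eform beta2 xi)) => //=.
- by move=> p eq12; rewrite eq12 ?mem_head.
- by move=> b IH /IH ->.
- by move=> b IHb c IHc eq12; rewrite IHb ?IHc // => h hin; rewrite eq12 // mem_cat hin ?orbT.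
- move=> xi IH eq12; rewrite IH => [|h hin]; last by rewrite eq12 // mem_cat hin orbT.
  by rewrite eq12 // mem_cat eform_forms.
- by move=> b IH /IH ->.
- by move=> xi1 IH1 xi2 IH2 eq12; rewrite IH1 ?IH2 // => h hin;
    rewrite eq12 // mem_cat hin ?orbT.
- by move=> c xi IH /IH ->.
Qed.

Definition is_prop (c : kform) : bool := if c is FProp _ then true else false.

Section FevalSat.
Variables (T : finType) (E : rel T) (lab : T -> nat -> bool) (l : nat) (u : T).
Variables (x s : 'rV[int]_n).
Hypothesis x_props : forall c (i : 'I_n), (i : nat) = index c S -> is_prop c ->
  x 0 i = (sat E lab c u)%:R.
Hypothesis s_counts : forall c (i : 'I_n), (i : nat) = index c S -> (md c < l)%N ->
  s 0 i = (\sum_(v | E u v && sat E lab c v) 1%N)%:R.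

Definition test_oracle (h : lform n) : bool := 0 <= leval h x s.

Lemma feval_sat a : {subset subf a <= S} -> (md a <= l)%N ->
  feval test_oracle a = sat E lab a u.
Proof.
move: a; apply (@kform_mut
  (fun a => {subset subf a <= S} -> (md a <= l)%N -> feval test_oracle a = sat E lab a u)
  (fun xi => {subset subfe xi <= S} -> (mde xi <= l)%N ->
     leval (eform test_oracle xi) x s = Defs.val E lab xi u)).
- move=> p pS _ /=; have := pS _ (mem_head _ _); rewrite -index_mem => ip.
  rewrite /test_oracle /leval /=.
  under eq_bigr => j _ do rewrite [X in s 0 j * X]mxE mulr0 addr0.
  rewrite (@sum_mul_coord (FProp p) _ (Ordinal ip)) // (@x_props (FProp p)) //=.
  by case: (lab u p); rewrite ?subrr ?lexx // sub0r oppr_ge0.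
- by move=> b IH bS md_b /=; rewrite IH // => z zb; apply: bS; rewrite inE zb orbT.
- move=> b IHb c IHc bcS; rewrite /= geq_max => /andP[md_b md_c].
  by rewrite IHb ?IHc // => z z_in; apply: bcS; rewrite inE mem_cat z_in ?orbT.
- move=> xi IH xiS md_xi /=; rewrite /test_oracle IH //.
  by move=> z z_in; apply: xiS; rewrite inE z_in orbT.
- by move=> c _ _ /=; rewrite leval_const.
- by move=> b IH bS md_b /=; rewrite leval_const IH.
- move=> b _ bS md_b /=; have := bS _ (subf_refl b); rewrite -index_mem => ib.
  rewrite /leval /= addr0.
  under eq_bigr => j _ do rewrite [X in x 0 j * X]mxE mulr0 add0r.
  by rewrite (@sum_mul_coord b _ (Ordinal ib)) // (@s_counts b).
- move=> xi1 IH1 xi2 IH2 xiS; rewrite /= geq_max => /andP[md1 md2].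
  by rewrite leval_add IH1 ?IH2 // => z z_in; apply: xiS; rewrite mem_cat z_in ?orbT.
- by move=> c xi IH xiS md_xi /=; rewrite leval_scale IH.
Qed.

End FevalSat.
End Compilation.

(** * Layers computing Boolean functions of threshold tests *)

Lemma sigma_succ (z : int) : sigma (z + 1) = (0 <= z)%R%:R.
Proof. by rewrite /sigma; case: (leP 0 z) => ? /=; lia. Qed.

Lemma sigma_bool (b : bool) : sigma b%:R = b%:R.
Proof. by case: b. Qed.

Lemma sigma_one_sub (N : nat) : sigma (1 - N%:R) = (N == 0)%N%:R.
Proof. by rewrite /sigma; case: N => [|N] /=; lia. Qed.

Section Layers.
Variables (T : finType) (E : rel T).

Definition layer (d d' : nat) (C A : 'M[int]_(d, d')) (b : 'rV[int]_d') (y : T -> 'rV[int]_d) :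
    T -> 'rV[int]_d' :=
  fun u => map_mx sigma (y u *m C + (\sum_(v | E u v) y v) *m A + b).

Section Threshold.
Variables (n : nat) (D : seq (lform n)).
Local Notation h_ j := (nth (lconst n 0) D j).

Definition threshold_own : 'M[int]_(n, size D) := \matrix_(i, j) (h_ j).1.1 0 i.
Definition threshold_nbr : 'M[int]_(n, size D) := \matrix_(i, j) (h_ j).1.2 0 i.
Definition threshold_bias : 'rV[int]_(size D) := \row_j ((h_ j).2 + 1).

Definition threshold_bits (y : T -> 'rV[int]_n) (u : T) : {ffun 'I_(size D) -> bool} :=
  [ffun j : 'I_(size D) => 0 <= leval (h_ j) (y u) (\sum_(v | E u v) y v)].

Lemma layer_threshold y u j :
  layer threshold_own threshold_nbr threshold_bias y u 0 j = (threshold_bits y u j)%:R.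
Proof.
rewrite /layer !mxE ffunE addrA sigma_succ /leval big_split /=.
by congr ((0 <= _ + _ + _)%R%:R); apply: eq_bigr => i _; rewrite mxE.
Qed.

End Threshold.

Section OneHot.
Variable m : nat.
Local Notation F := {ffun 'I_m -> bool}.

Definition onehot_weight : 'M[int]_(m, #|F|) :=
  \matrix_(j, k) (if (enum_val k : F) j then 1 else -1).
Definition onehot_bias : 'rV[int]_#|F| :=
  \row_k (1 - (\sum_j (enum_val k : F) j : nat)%N%:R).

Lemma layer_onehot (y : T -> 'rV[int]_m) (be : T -> F) :
  (forall u j, y u 0 j = (be u j)%:R) ->
  forall u k, layer onehot_weight 0 onehot_bias y u 0 k = (enum_val k == be u)%:R.
Proof.
move=> y_be u k; set f := enum_val k.
rewrite /layer mulmx0 addr0 !mxE.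
(* the weighted sum counts the ones of [f] minus the positions where [be u] differs *)
have -> : \sum_j y u 0 j * onehot_weight j k =
          (\sum_j (f j : nat))%N%:R - (\sum_j (f j != be u j : nat))%N%:R.
  rewrite !natr_sum -sumrB; apply: eq_bigr => j _.
  by rewrite y_be mxE; case: (f j); case: (be u j).
rewrite -/f addrC addrA subrK sigma_one_sub sum_nat_eq0; congr (nat_of_bool _ )%:R.
apply/forall_inP/eqP => [f_be|-> j _]; last by rewrite eqxx.
by apply/ffunP => j; move: (f_be j isT); case: (f j); case: (be u j).
Qed.

End OneHot.

Section Lookup.
Variables (K : finType) (n : nat) (g : K -> 'I_n -> bool).

Definition lookup_weight : 'M[int]_(#|K|, n) := \matrix_(k, i) (g (enum_val k) i)%:R.

Lemma layer_lookup (y : T -> 'rV[int]_#|K|) (be : T -> K) :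
  (forall u k, y u 0 k = (enum_val k == be u)%:R) ->
  forall u i, layer lookup_weight 0 0 y u 0 i = (g (be u) i)%:R.
Proof.
move=> y_onehot u i; rewrite /layer mulmx0 !addr0 !mxE.
rewrite (bigD1 (enum_rank (be u))) //= big1 ?addr0.
  by rewrite y_onehot enum_rankK eqxx mul1r mxE enum_rankK sigma_bool.
move=> k k_be; rewrite y_onehot; case: eqP => [val_k|]; last by rewrite mul0r.
by rewrite -val_k enum_valK eqxx in k_be.
Qed.

End Lookup.

Section Stage.
Variables (n : nat) (D : seq (lform n)) (g : {ffun 'I_(size D) -> bool} -> 'I_n -> bool).

Definition stage_layers (d : nat) (L : layers n d) : layers n d :=
  LCons (threshold_own D) (threshold_nbr D) (threshold_bias D)
    (LCons (onehot_weight (size D)) 0 (onehot_bias (size D)) (LCons (lookup_weight g) 0 0 L)).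

Definition stage (y : T -> 'rV[int]_n) : T -> 'rV[int]_n :=
  layer (lookup_weight g) 0 0 (layer (onehot_weight (size D)) 0 (onehot_bias (size D))
    (layer (threshold_own D) (threshold_nbr D) (threshold_bias D) y)).

Lemma run_stage_layers (d : nat) (L : layers n d) y :
  run E (stage_layers L) y = run E L (stage y).
Proof. by []. Qed.

Lemma stageE y u i : stage y u 0 i = (g (threshold_bits D y u) i)%:R.
Proof.
rewrite /stage; apply: layer_lookup => v k; apply: layer_onehot => w j.
exact: layer_threshold.
Qed.

End Stage.
End Layers.

(** * The compiled network *)

Section Network.
Variable S : seq kform.
Local Notation n := (size S).
Local Notation nthS i := (nth (FProp 0) S i).

Definition S_tests : seq (lform n) := flatten [seq tests S c | c <- S].

Definition bits_oracle (be : {ffun 'I_(size S_tests) -> bool}) (h : lform n) : bool :=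
  [exists j : 'I_(size S_tests), (nth (lconst n 0) S_tests j == h) && be j].

Definition truth_table (be : {ffun 'I_(size S_tests) -> bool}) (i : 'I_n) : bool :=
  feval (bits_oracle be) (nthS i).

Fixpoint rounds (t : nat) : layers n n :=
  if t is t'.+1 then stage_layers truth_table (rounds t') else LNil n.

Lemma nlayers_rounds t : nlayers (rounds t) = (3 * t)%N.
Proof. by elim: t => //= t ->; rewrite mulnS. Qed.

Definition known (l : nat) (c : kform) : bool := is_prop c || (md c < l)%N.

Definition correct_upto (T : finType) (E : rel T) (lab : T -> nat -> bool) (l : nat)
    (x : T -> 'rV[int]_n) :=
  forall u (i : 'I_n), known l (nthS i) -> x u 0 i = (sat E lab (nthS i) u)%:R.

Hypothesis S_closed : forall c, c \in S -> {subset subf c <= S}.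

Lemma stage_correct T E lab l x :
  @correct_upto T E lab l x -> correct_upto E lab l.+1 (stage E truth_table x).
Proof.
move=> x_ok u i known_i; rewrite stageE /truth_table; congr (nat_of_bool _)%:R.
set c := nthS i; have cS : c \in S by apply: mem_nth.
have md_c : (md c <= l)%N.
  by move: known_i; rewrite /known -/c ltnS => /orP[|//]; case: (c).
rewrite (@feval_ext _ _ (test_oracle (x u) (\sum_(v | E u v) x v))); last first.
  move=> h h_c; have h_tests : h \in S_tests by apply/flatten_mapP; exists c.
  apply/existsP/idP => [[j /andP[/eqP <-]]|h_true]; first by rewrite ffunE.
  have h_idx : (index h S_tests < size S_tests)%N by rewrite index_mem.
  by exists (Ordinal h_idx); rewrite /= nth_index // eqxx ffunE /= nth_index.
apply: feval_sat (S_closed cS) md_c => c' i' i'_c';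
  have c'S : c' \in S by rewrite -index_mem -i'_c'.
- by move=> prop_c'; rewrite x_ok i'_c' nth_index // /known prop_c'.
- move=> md_c'; rewrite summxE natr_sum big_mkcondr /=; apply: eq_bigr => v _.
  by rewrite x_ok i'_c' nth_index // ?/known ?md_c' ?orbT //; case: sat.
Qed.

Lemma rounds_correct T E lab t l x : @correct_upto T E lab l x ->
  correct_upto E lab (l + t) (run E (rounds t) x).
Proof.
elim: t l x => [|t IH] l x x_ok; first by rewrite addn0.
by rewrite run_stage_layers -addSnnS; apply/IH/stage_correct.
Qed.

End Network.

Definition input_props (S : seq kform) : 'I_(size S) -> nat :=
  fun i => if nth (FProp 0) S i is FProp p then p else 0.

Definition compile (phi : kform) : GNN :=
  let S := subf phi in MkGNN (@input_props S) (@rounds S (md phi).+1) (@coord S phi 0).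

Lemma num_layers_compile phi : num_layers (compile phi) = (3 * (md phi).+1)%N.
Proof. exact: nlayers_rounds. Qed.

Lemma input_state_correct T E lab phi :
  correct_upto E lab 0 (@input_state T lab (compile phi)).
Proof. by move=> u i; rewrite /known ltn0 orbF mxE /= /input_props; case: nth. Qed.

Lemma accepts_compile T E lab phi u : @accepts T E lab (compile phi) u <-> sat E lab phi u.
Proof.
set S := subf phi; have phi_idx : (index phi S < size S)%N by rewrite index_mem subf_refl.
have out_ok := rounds_correct (@subf_trans phi) (t := (md phi).+1)
  (@input_state_correct T E lab phi).
rewrite /accepts /=; under eq_bigr => i _ do rewrite mulrC.
rewrite (@sum_mul_coord S phi _ (Ordinal phi_idx)) // out_ok /= nth_index ?subf_refl //.
  by case: sat.
by rewrite /known ltnSn orbT.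
Qed.

Theorem mainTheorem3 :
  exists c : nat, forall phi : kform, exists A : GNN,
    (num_layers A <= c * (md phi).+1)%N /\
    (forall (T : finType) (E : rel T) (lab : T -> nat -> bool) (u : T),
        accepts E lab A u <-> sat E lab phi u).
Proof.
exists 3%N => phi; exists (compile phi); split; last by move=> *; apply: accepts_compile.
by rewrite num_layers_compile.
Qed.
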